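(* Let $G$ be a connected finite simple undirected graph and let $W:V_G\to\mathbb{R}$ be a single-basin potential. Let $\psi$ be the ground state of $H_{G,W}$ (chosen with $\psi(x)>0$ for all $x$), and let $$S[\psi]=\{x\in V_G : \Delta^2\psi(x)<0\},\qquad \Delta^2\psi(x)=-d_x\psi(x)+\sum_{y\in N_x}\psi(y).$$ Then $S[\psi]$ is a connected set of vertices in $G$.
   Context: For a finite simple undirected graph $G$ with vertex set $V_G$, let $\mathcal{H}_G$ be the complex Hilbert space with orthonormal basis $\{|x\rangle : x\in V_G\}$. The graph Laplacian is $L_G=\sum_{x} d_x |x\rangle\langle x| - \sum_{x\sim y}|x\rangle\langle y|$, where $d_x$ is the degree of $x$, $N_x$ is the set of neighbors of $x$, and the second sum runs over ordered pairs of adjacent vertices. For a potential $W:V_G\to\mathbb{R}$, $H_{G,W}=L_G+\sum_{x} W(x)|x\rangle\langle x|$. For connected $G$ the ground state is nondegenerate and can be chosen with strictly positive amplitudes $\psi(x)$ (Perron–Frobenius). A potential $W$ is single-basin if for every real number $E$ the set $\{x\in V_G : W(x)<E\}$ is a connected set of vertices in $G$ (induces a connected subgraph). *)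

From HB Require Import structures.
From mathcomp Require Import all_boot all_order all_algebra.
From mathcomp Require Import reals.
Set Implicit Arguments. Unset Strict Implicit. Unset Printing Implicit Defensive.
Import Order.TTheory GRing.Theory Num.Theory.
Local Open Scope ring_scope.

Definition simple_graph (T : finType) (e : rel T) : Prop :=
  symmetric e /\ irreflexive e.

Definition connected_graph (T : finType) (e : rel T) : Prop :=
  forall x y : T, connect e x y.

(* A vertex set A is connected: the induced subgraph on A is connected,
   i.e. any two vertices of A are joined by a path staying inside A.
   (The empty set is connected.) *)
Definition connected_set (T : finType) (e : rel T) (A : {set T}) : Prop :=
  forall x y, x \in A -> y \in A ->
    connect [rel u v | [&& e u v, u \in A & v \in A]] x y.

Definition deg (T : finType) (e : rel T) (x : T) : nat := #|[set y | e x y]|.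

(* Action of H_{G,W} = L_G + W on a vector psi : T -> R. *)
Definition hamiltonian (R : realType) (T : finType) (e : rel T) (W : T -> R)
  (psi : T -> R) : T -> R :=
  fun x => (deg e x)%:R * psi x - \sum_(y | e x y) psi y + W x * psi x.

Definition is_eigenvalue (R : realType) (T : finType) (e : rel T) (W : T -> R)
  (mu : R) : Prop :=
  exists v : T -> R, (exists x, v x != 0) /\ hamiltonian e W v = (fun x => mu * v x).

Definition ground_state (R : realType) (T : finType) (e : rel T) (W : T -> R)
  (psi : T -> R) : Prop :=
  (exists x, psi x != 0) /\
  exists lam : R, hamiltonian e W psi = (fun x => lam * psi x) /\
    forall mu, is_eigenvalue e W mu -> lam <= mu.

Definition single_basin (R : realType) (T : finType) (e : rel T) (W : T -> R) : Prop :=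
  forall E : R, connected_set e [set x | W x < E].

Definition Delta2 (R : realType) (T : finType) (e : rel T) (psi : T -> R) (x : T) : R :=
  - (deg e x)%:R * psi x + \sum_(y | e x y) psi y.

Definition Sset (R : realType) (T : finType) (e : rel T) (psi : T -> R) : {set T} :=
  [set x | Delta2 e psi x < 0].

From HB Require Import structures.
From mathcomp Require Import all_boot all_order all_algebra.
From mathcomp Require Import reals.
From mathcomp Require Import ring.
Set Implicit Arguments. Unset Strict Implicit. Unset Printing Implicit Defensive.
Import Order.TTheory GRing.Theory Num.Theory.
Local Open Scope ring_scope.

(* For an eigenvector psi of H_{G,W} with eigenvalue lam, the eigenvalue
   equation reads Delta^2 psi = (W - lam) psi; when psi is positive, S[psi]
   is therefore the sublevel set {W < lam}, which is connected for a
   single-basin potential. *)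

Section PositiveEigenvector.

Variables (R : realType) (T : finType) (e : rel T) (W : T -> R).

Lemma hamiltonianE (psi : T -> R) (x : T) :
  hamiltonian e W psi x = W x * psi x - Delta2 e psi x.
Proof. rewrite /hamiltonian /Delta2; ring. Qed.

Lemma Delta2_eigenvector (psi : T -> R) (lam : R) :
  hamiltonian e W psi = (fun y => lam * psi y) ->
  forall x, Delta2 e psi x = (W x - lam) * psi x.
Proof.
move=> eigen x; move/(congr1 (fun f => f x)): eigen => /=.
rewrite hamiltonianE => eigen_x.
by rewrite mulrBl -eigen_x; ring.
Qed.

Lemma Sset_positive_eigenvector (psi : T -> R) (lam : R) :
  hamiltonian e W psi = (fun y => lam * psi y) -> (forall x, 0 < psi x) ->
  Sset e psi = [set x | W x < lam].
Proof.
move=> eigen psi_gt0; apply/setP => x; rewrite !inE.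
by rewrite (Delta2_eigenvector eigen) pmulr_llt0 // subr_lt0.
Qed.

End PositiveEigenvector.

Theorem proposition5 (R : realType) (T : finType) (e : rel T) (W : T -> R)
  (psi : T -> R) :
  simple_graph e -> connected_graph e -> single_basin e W ->
  ground_state e W psi -> (forall x, 0 < psi x) ->
  connected_set e (Sset e psi).
Proof.
move=> _ _ basin [_ [lam [eigen _]]] psi_gt0.
by rewrite (Sset_positive_eigenvector eigen psi_gt0); apply: basin.
Qed.
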